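(* Let $R$ be a ring and $I$ a regular ideal of $R$ such that idempotents lift modulo $I$. Then $R$ is weakly $r$-clean if and only if $R/I$ is weakly $r$-clean.
   Context: Rings are associative with identity. $Idem(R)$ denotes the idempotents and $Reg(R)=\{r\in R: r=ryr \text{ for some } y\in R\}$ the (von Neumann) regular elements. An ideal $I$ is regular if every element of $I$ is a regular element. Idempotents lift modulo $I$ if for every $x\in R$ with $x^2-x\in I$ there is $e\in Idem(R)$ with $e-x\in I$. An element $x$ is weakly $r$-clean if $x=r+e$ or $x=r-e$ for some $r\in Reg(R)$, $e\in Idem(R)$; a ring is weakly $r$-clean if all its elements are. *)

(* Rings are associative with identity (pzRingType: the zero
   ring is allowed, so that R/R makes sense); not necessarily commutative. *)
From HB Require Import structures.
From mathcomp Require Import all_boot all_algebra generic_quotient.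
Set Implicit Arguments.
Unset Strict Implicit.
Unset Printing Implicit Defensive.
Import GRing.Theory.
Local Open Scope ring_scope.
Local Open Scope quotient_scope.

Definition idempotent_el (R : pzRingType) (e : R) : Prop := e * e = e.
Definition regular_el (R : pzRingType) (r : R) : Prop := exists y : R, r = r * y * r.

Definition weakly_rclean_el (R : pzRingType) (x : R) : Prop :=
  exists r e : R, regular_el r /\ idempotent_el e /\ (x = r + e \/ x = r - e).
Definition weakly_rclean (R : pzRingType) : Prop :=
  forall x : R, weakly_rclean_el x.

Definition two_sided_ideal (R : pzRingType) (I : {pred R}) : Prop :=
  [/\ 0 \in I,
      (forall x y, x \in I -> y \in I -> x - y \in I),
      (forall r x, x \in I -> r * x \in I) &
      (forall r x, x \in I -> x * r \in I)].

Definition regular_ideal (R : pzRingType) (I : {pred R}) : Prop :=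
  forall x, x \in I -> regular_el x.

Definition idempotents_lift (R : pzRingType) (I : {pred R}) : Prop :=
  forall x : R, x * x - x \in I -> exists e : R, idempotent_el e /\ e - x \in I.

Section Quotient.
Variables (R : pzRingType) (I : {pred R}) (HI : two_sided_ideal I).

Definition eqI (x y : R) : bool := x - y \in I.

Lemma I0 : 0 \in I. Proof. by case: HI. Qed.
Lemma IB x y : x \in I -> y \in I -> x - y \in I. Proof. by case: HI => _ H _ _; apply: H. Qed.
Lemma IN x : x \in I -> - x \in I.
Proof. by move=> Hx; rewrite -sub0r; apply: IB => //; apply: I0. Qed.
Lemma ID x y : x \in I -> y \in I -> x + y \in I.
Proof. by move=> Hx Hy; rewrite -[y]opprK; apply: IB => //; apply: IN. Qed.
Lemma IMl r x : x \in I -> r * x \in I. Proof. by case: HI => _ _ H _; apply: H. Qed.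
Lemma IMr r x : x \in I -> x * r \in I. Proof. by case: HI => _ _ _ H; apply: H. Qed.

Lemma eqI_refl : reflexive eqI. Proof. by move=> x; rewrite /eqI subrr I0. Qed.
Lemma eqI_sym : symmetric eqI.
Proof.
by move=> x y; apply/idP/idP => H; rewrite /eqI -opprB; apply: IN.
Qed.
Lemma eqI_trans : transitive eqI.
Proof.
move=> y x z Hxy Hyz; rewrite /eqI -(subrKA y); rewrite addrC.
by apply: ID.
Qed.

Canonical eqI_equiv := EquivRel eqI eqI_refl eqI_sym eqI_trans.

Definition quot := {eq_quot eqI}.
HB.instance Definition _ := Choice.on quot.



Definition q_zero : quot := \pi_quot 0.
Definition q_one : quot := \pi_quot 1.
Definition q_opp (a : quot) : quot := \pi_quot (- repr a).
Definition q_add (a b : quot) : quot := \pi_quot (repr a + repr b).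
Definition q_mul (a b : quot) : quot := \pi_quot (repr a * repr b).

Lemma piP x y : reflect (\pi_quot x = \pi_quot y) (eqI x y).
Proof. exact: (@eqmodP _ eqI_equiv x y). Qed.

Lemma repr_pi x : eqI (repr (\pi_quot x)) x.
Proof. by apply/piP; rewrite reprK. Qed.

Lemma repr_pi' x : x - repr (\pi_quot x) \in I.
Proof. by rewrite -/(eqI _ _) eqI_sym; apply: repr_pi. Qed.

Lemma pi_opp x : \pi_quot (- x) = q_opp (\pi x).
Proof.
rewrite /q_opp; apply/piP; rewrite /eqI opprK addrC.
exact: repr_pi.
Qed.

Lemma pi_add x y : \pi_quot (x + y) = q_add (\pi x) (\pi y).
Proof.
rewrite /q_add; apply/piP; rewrite /eqI opprD addrACA.
by apply: ID; apply: repr_pi'.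
Qed.

Lemma pi_mul x y : \pi_quot (x * y) = q_mul (\pi x) (\pi y).
Proof.
rewrite /q_mul; apply/piP; rewrite /eqI.
have -> : x * y - repr (\pi_quot x) * repr (\pi_quot y)
    = (x - repr (\pi_quot x)) * y + repr (\pi_quot x) * (y - repr (\pi_quot y)).
  by rewrite mulrBl mulrBr addrA subrK.
apply: ID; first exact/IMr/repr_pi'.
exact/IMl/repr_pi'.
Qed.

Lemma addqE x y : q_add (\pi_quot x) (\pi_quot y) = \pi_quot (x + y).
Proof. by rewrite pi_add. Qed.
Lemma oppqE x : q_opp (\pi_quot x) = \pi_quot (- x).
Proof. by rewrite pi_opp. Qed.
Lemma mulqE x y : q_mul (\pi_quot x) (\pi_quot y) = \pi_quot (x * y).
Proof. by rewrite pi_mul. Qed.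

Lemma q_addA : associative q_add.
Proof.
by elim/(@quotW _ quot)=> x; elim/(@quotW _ quot)=> y; elim/(@quotW _ quot)=> z; rewrite !addqE addrA.
Qed.
Lemma q_addC : commutative q_add.
Proof. by elim/(@quotW _ quot)=> x; elim/(@quotW _ quot)=> y; rewrite !addqE addrC. Qed.
Lemma q_add0 : left_id q_zero q_add.
Proof. by elim/(@quotW _ quot)=> x; rewrite /q_zero addqE add0r. Qed.
Lemma q_addN : left_inverse q_zero q_opp q_add.
Proof. by elim/(@quotW _ quot)=> x; rewrite oppqE addqE addNr. Qed.

HB.instance Definition _ := GRing.isZmodule.Build quot q_addA q_addC q_add0 q_addN.

Lemma q_addE (a b : quot) : a + b = q_add a b. Proof. by []. Qed.

Lemma q_mulA : associative q_mul.
Proof.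
by elim/(@quotW _ quot)=> x; elim/(@quotW _ quot)=> y; elim/(@quotW _ quot)=> z; rewrite !mulqE mulrA.
Qed.
Lemma q_mul1 : left_id q_one q_mul.
Proof. by elim/(@quotW _ quot)=> x; rewrite /q_one mulqE mul1r. Qed.
Lemma q_mulr1 : right_id q_one q_mul.
Proof. by elim/(@quotW _ quot)=> x; rewrite /q_one mulqE mulr1. Qed.
Lemma q_mulDl : left_distributive q_mul (@GRing.add quot).
Proof.
elim/(@quotW _ quot)=> x; elim/(@quotW _ quot)=> y; elim/(@quotW _ quot)=> z.
by rewrite !q_addE [in LHS]addqE !mulqE addqE mulrDl.
Qed.
Lemma q_mulDr : right_distributive q_mul (@GRing.add quot).
Proof.
elim/(@quotW _ quot)=> x; elim/(@quotW _ quot)=> y; elim/(@quotW _ quot)=> z.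
by rewrite !q_addE [in LHS]addqE !mulqE addqE mulrDr.
Qed.

HB.instance Definition _ := GRing.Zmodule_isPzRing.Build quot
  q_mulA q_mul1 q_mulr1 q_mulDl q_mulDr.

End Quotient.

(* Weak r-cleanness passes to every homomorphic image, since ring morphisms
   preserve regular elements and idempotents.  Conversely, if x + I is
   (r + I) +- a, lift the idempotent a to an idempotent e of R; then
   s := x -+ e is regular modulo I, i.e. s - s y s lies in I for some y, and
   as I is a regular ideal the regularity of s - s y s upgrades to that of s. *)
From HB Require Import structures.
From mathcomp Require Import all_boot all_algebra generic_quotient.

Set Implicit Arguments.
Unset Strict Implicit.
Unset Printing Implicit Defensive.

Import GRing.Theory.
Local Open Scope ring_scope.
Local Open Scope quotient_scope.

Section RegularElements.
Variable R : pzRingType.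

(* With u := s - s y s one has s (1 - y s) = u = (1 - s y) s, so u = u z u
   gives s = s (y + (1 - y s) z (1 - s y)) s. *)
Lemma regular_el_of_defect (s y : R) : regular_el (s - s * y * s) -> regular_el s.
Proof.
move=> [z Hz]; exists (y + (1 - y * s) * z * (1 - s * y)).
have defect_l : s * (1 - y * s) = s - s * y * s by rewrite mulrBr mulr1 mulrA.
have defect_r : (1 - s * y) * s = s - s * y * s by rewrite mulrBl mul1r.
rewrite mulrDr mulrDl !mulrA defect_l -(mulrA _ (1 - s * y)) defect_r -Hz.
by rewrite addrC subrK.
Qed.

End RegularElements.

Section RingMorphisms.
Variables (R S : pzRingType) (f : {rmorphism R -> S}).

Lemma rmorph_regular_el (r : R) : regular_el r -> regular_el (f r).
Proof. by move=> [y Hy]; exists (f y); rewrite -!rmorphM -Hy. Qed.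

Lemma rmorph_idempotent_el (e : R) : idempotent_el e -> idempotent_el (f e).
Proof. by rewrite /idempotent_el -rmorphM => ->. Qed.

Lemma rmorph_weakly_rclean_el (x : R) : weakly_rclean_el x -> weakly_rclean_el (f x).
Proof.
move=> [r [e [Hr [He Hx]]]]; exists (f r), (f e).
split; [exact: rmorph_regular_el | split; first exact: rmorph_idempotent_el].
by case: Hx => ->; [left; rewrite rmorphD | right; rewrite rmorphB].
Qed.

Lemma weakly_rclean_surj_image :
  (forall y, exists x, f x = y) -> weakly_rclean R -> weakly_rclean S.
Proof. by move=> f_surj W y; have [x <-] := f_surj y; exact/rmorph_weakly_rclean_el. Qed.

End RingMorphisms.

Section QuotientProjection.
Variables (R : pzRingType) (I : {pred R}) (HI : two_sided_ideal I).

Definition quot_proj (x : R) : quot HI := \pi_(quot HI) x.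

Lemma quot_proj_is_zmod_morphism : zmod_morphism quot_proj.
Proof. by move=> x y; rewrite /quot_proj pi_add pi_opp. Qed.

Lemma quot_proj_is_monoid_morphism : monoid_morphism quot_proj.
Proof. by split=> // x y; rewrite /quot_proj pi_mul. Qed.

HB.instance Definition _ :=
  GRing.isZmodMorphism.Build R (quot HI) quot_proj quot_proj_is_zmod_morphism.
HB.instance Definition _ :=
  GRing.isMonoidMorphism.Build R (quot HI) quot_proj quot_proj_is_monoid_morphism.

Lemma quot_proj_surj (q : quot HI) : exists x, quot_proj x = q.
Proof. by exists (repr q); rewrite /quot_proj reprK. Qed.

Lemma quot_proj_eq (x y : R) : quot_proj x = quot_proj y <-> x - y \in I.
Proof. exact: rwP (piP HI x y). Qed.

Lemma quot_proj_eq0 (x : R) : quot_proj x = 0 <-> x \in I.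
Proof. by rewrite -(rmorph0 quot_proj) -{2}[x]subr0; exact: quot_proj_eq. Qed.

Lemma regular_el_lift (s : R) :
  regular_ideal I -> regular_el (quot_proj s) -> regular_el s.
Proof.
move=> I_reg [q]; have [y <-] := quot_proj_surj q => Hq.
apply: (regular_el_of_defect (y := y)); apply: I_reg.
by apply/quot_proj_eq0; rewrite !rmorphB !rmorphM -Hq subrr.
Qed.

Lemma idempotent_el_lift (a : quot HI) : idempotents_lift I -> idempotent_el a ->
  exists2 e : R, idempotent_el e & quot_proj e = a.
Proof.
move=> I_lift; have [x <-] := quot_proj_surj a => Ha.
have [|e [He Hex]] := I_lift x.
  by apply/quot_proj_eq0; rewrite rmorphB rmorphM Ha subrr.
by exists e => //; apply/quot_proj_eq.
Qed.

Lemma weakly_rclean_el_lift (x : R) : regular_ideal I -> idempotents_lift I ->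
  weakly_rclean_el (quot_proj x) -> weakly_rclean_el x.
Proof.
move=> I_reg I_lift [r [a [Hr [Ha]]]].
have [e He <-] := idempotent_el_lift I_lift Ha.
case=> Hx.
- exists (x - e), e; split; last by split=> //; left; rewrite subrK.
  by apply: regular_el_lift; rewrite //= rmorphB /= Hx addrK.
- exists (x + e), e; split; last by split=> //; right; rewrite addrK.
  by apply: regular_el_lift; rewrite //= rmorphD /= Hx subrK.
Qed.

End QuotientProjection.

Theorem theorem2p15 (R : pzRingType) (I : {pred R}) (HI : two_sided_ideal I) :
  regular_ideal I -> idempotents_lift I ->
  (weakly_rclean R <-> weakly_rclean (quot HI)).
Proof.
move=> I_reg I_lift; split.
- exact/weakly_rclean_surj_image/quot_proj_surj.
- move=> W x; exact: weakly_rclean_el_lift I_reg I_lift (W (quot_proj HI x)).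
Qed.
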